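(* Let $K\ge1$, $p_D\in(0,1]$, and for each $y\in[K]$ let $p_y^+>0$, $p_y^->0$ with $\sum_y(p_y^++p_y^-)=1$, $p_y:=p_y^++p_y^-$, $p^\pm:=\sum_yp_y^\pm$, and let $C^\pm_{y,y}\in[0,1)$ be fixed. For unknowns $(q_y,q_y^+)_y$ define \[ \Delta\mathrm{eq.opp.}(y)=\frac{p_D}{p_y^+p_y^-}(C^+_{y,y}-1)(q_yp_y^+-p_yq_y^+)+(C^+_{y,y}-C^-_{y,y})\Bigl(1-p_D\frac{q_y-q_y^+}{p_y^-}\Bigr). \] If either $p_D<p^-\min_y\frac{C^+_{y,y}-C^-_{y,y}}{1-C^-_{y,y}}$ or $p_D<p^+\min_y\frac{C^-_{y,y}-C^+_{y,y}}{1-C^+_{y,y}}$, then there exist no $(q_y,q_y^+)_y$ with $\sum_yq_y=1$, $0\le q_y^+\le q_y$ for all $y$, and $\Delta\mathrm{eq.opp.}(y)=0$ for all $y$.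
   Context: Interpretation: $p_D=\mathbb{P}(D=1)$ (memorized mass), $p_y^\pm=\mathbb{P}(Y=y,A=1\text{ resp. }0)$, $q_y=\mathbb{P}(Y=y\mid D=1)$, $q_y^+=\mathbb{P}(Y=y,A=1\mid D=1)$, $C^\pm_{y,y}$ the base classifier's true-positive rates for label $y$ on the unmemorized part in group $A=1$ resp. $A=0$; the formula is the equal opportunity gap of the memorizing classifier, with $C^\pm$ treated as fixed parameters. *)

From mathcomp Require Import all_boot all_order all_algebra.
Set Implicit Arguments. Unset Strict Implicit. Unset Printing Implicit Defensive.
Import Order.TTheory GRing.Theory Num.Theory.
Local Open Scope ring_scope.

(* Minimum over y in [K] of f y; i0 is any element of 'I_K (used as the seed
   of the fold, which does not change the value since f i0 is among the terms). *)
Definition fmin (R : realDomainType) (K : nat) (i0 : 'I_K) (f : 'I_K -> R) : R :=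
  \big[Num.min/f i0]_(i < K) f i.

Definition delta_eqopp (R : realFieldType) (K : nat)
  (pD : R) (pp pm Cp Cm q qp : 'I_K -> R) (y : 'I_K) : R :=
  pD / (pp y * pm y) * (Cp y - 1) * (q y * pp y - (pp y + pm y) * qp y)
  + (Cp y - Cm y) * (1 - pD * ((q y - qp y) / pm y)).

(** Multiplying [Delta eq.opp.(y) = 0] by [p_y^+ p_y^-] turns it into the
    balance equation
      [pD r_y (1 - C^-_y) / p_y^- - pD s_y (1 - C^+_y) / p_y^+ = C^+_y - C^-_y]
    between the memorized masses [r_y = q_y - q_y^+] (group [A = 0]) and
    [s_y = q_y^+] (group [A = 1]).  Both terms on the left are nonnegative, so
    [pD r_y >= p_y^- (C^+_y - C^-_y) / (1 - C^-_y)] and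
    [pD s_y >= p_y^+ (C^-_y - C^+_y) / (1 - C^+_y)].  Summing over [y] and using
    that the [r_y] and the [s_y] each have total mass at most [1] gives
    [pD >= p^- min_y (...)] and [pD >= p^+ min_y (...)], contradicting either
    hypothesis. *)

From mathcomp Require Import all_boot all_order all_algebra.
From mathcomp Require Import ring lra.
Import Order.TTheory GRing.Theory Num.Theory.
Set Implicit Arguments. Unset Strict Implicit.
Local Open Scope ring_scope.

Lemma fmin_le (R : realDomainType) K (i0 : 'I_K) (f : 'I_K -> R) y :
  fmin i0 f <= f y.
Proof. by rewrite /fmin (bigD1 y) //= ge_min lexx. Qed.

Lemma delta_eqopp_eq0_balance (R : realFieldType) K
    (pD : R) (pp pm Cp Cm q qp : 'I_K -> R) y :
  0 < pp y -> 0 < pm y -> delta_eqopp pD pp pm Cp Cm q qp y = 0 ->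
  pD * (q y - qp y) * (1 - Cm y) / pm y - pD * qp y * (1 - Cp y) / pp y
    = Cp y - Cm y.
Proof.
move=> pp_gt0 pm_gt0 delta_eq0; apply/eqP; rewrite -subr_eq0 -oppr_eq0.
rewrite -delta_eq0 /delta_eqopp; apply/eqP.
by field; rewrite !gt_eqF.
Qed.

Lemma mass_ge_of_balance (R : realFieldType) (pD p p' r s c c' : R) :
  0 <= pD -> 0 < p -> 0 < p' -> 0 <= s -> c < 1 -> c' < 1 ->
  pD * r * (1 - c) / p - pD * s * (1 - c') / p' = c' - c ->
  p * ((c' - c) / (1 - c)) <= pD * r.
Proof.
move=> pD_ge0 p_gt0 p'_gt0 s_ge0 c_lt1 c'_lt1 balance.
have c_gap : 0 < 1 - c by rewrite subr_gt0.
have other_mass_ge0 : 0 <= pD * s * (1 - c') / p'.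
  apply: divr_ge0 (ltW p'_gt0); apply: mulr_ge0 (mulr_ge0 pD_ge0 s_ge0) _.
  by rewrite subr_ge0 ltW.
have -> : pD * r = p * ((c' - c + pD * s * (1 - c') / p') / (1 - c)).
  by rewrite -balance subrK; field; rewrite !gt_eqF.
by rewrite ler_pM2l // ler_pM2r ?invr_gt0 // lerDl.
Qed.

Lemma sum_split_le1 (R : realDomainType) (I : finType)
    (q s : I -> R) :
  \sum_y q y = 1 -> (forall y, 0 <= s y <= q y) ->
  \sum_y (q y - s y) <= 1 /\ \sum_y s y <= 1.
Proof.
move=> sum_q s_bounds.
have s_ge0 : 0 <= \sum_y s y.
  by apply: sumr_ge0 => y _; case/andP: (s_bounds y).
have r_ge0 : 0 <= \sum_y (q y - s y).
  by apply: sumr_ge0 => y _; case/andP: (s_bounds y) => _; rewrite subr_ge0.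
have split_q : \sum_y (q y - s y) + \sum_y s y = 1.
  by rewrite -big_split /= -sum_q; apply: eq_bigr => y _; rewrite subrK.
split; lra.
Qed.

Lemma sum_mul_le_of_le (R : realDomainType) (I : finType)
    (p r : I -> R) (m c : R) :
  (forall y, p y * m <= c * r y) -> 0 <= c -> \sum_y r y <= 1 ->
  (\sum_y p y) * m <= c.
Proof.
move=> le_pr c_ge0 sum_r_le1.
rewrite mulr_suml (le_trans (ler_sum _ (fun y _ => le_pr y))) //.
by rewrite -mulr_sumr ler_piMr.
Qed.

Theorem corollary14 (R : realFieldType) (K : nat) (hK : (0 < K)%N)
  (pD : R) (pp pm Cp Cm : 'I_K -> R) :
  0 < pD -> pD <= 1 ->
  (forall y, 0 < pp y) -> (forall y, 0 < pm y) ->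
  \sum_(y < K) (pp y + pm y) = 1 ->
  (forall y, 0 <= Cp y < 1) -> (forall y, 0 <= Cm y < 1) ->
  (pD < (\sum_(y < K) pm y) *
          fmin (Ordinal hK) (fun y => (Cp y - Cm y) / (1 - Cm y))
   \/ pD < (\sum_(y < K) pp y) *
          fmin (Ordinal hK) (fun y => (Cm y - Cp y) / (1 - Cp y))) ->
  ~ (exists q qp : 'I_K -> R,
       \sum_(y < K) q y = 1 /\
       (forall y, 0 <= qp y <= q y) /\
       (forall y, delta_eqopp pD pp pm Cp Cm q qp y = 0)).
Proof.
move=> pD_gt0 _ pp_gt0 pm_gt0 _ Cp_bounds Cm_bounds small_pD.
move=> [q [qp [sum_q [qp_bounds delta_eq0]]]].
have balance y := delta_eqopp_eq0_balance (pp_gt0 y) (pm_gt0 y) (delta_eq0 y).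
have [sum_r_le1 sum_s_le1] := sum_split_le1 sum_q qp_bounds.
have Cp_lt1 y : Cp y < 1 by case/andP: (Cp_bounds y).
have Cm_lt1 y : Cm y < 1 by case/andP: (Cm_bounds y).
have qp_ge0 y : 0 <= qp y by case/andP: (qp_bounds y).
have r_ge0 y : 0 <= q y - qp y by case/andP: (qp_bounds y); rewrite subr_ge0.
case: small_pD; apply/negP; rewrite -leNgt.
- apply: sum_mul_le_of_le (ltW pD_gt0) sum_r_le1 => y.
  apply: le_trans (mass_ge_of_balance (ltW pD_gt0) (pm_gt0 y) (pp_gt0 y)
    (qp_ge0 y) (Cm_lt1 y) (Cp_lt1 y) (balance y)).
  by rewrite ler_pM2l ?fmin_le.
- apply: sum_mul_le_of_le (ltW pD_gt0) sum_s_le1 => y.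
  have balance_swap : pD * qp y * (1 - Cp y) / pp y
      - pD * (q y - qp y) * (1 - Cm y) / pm y = Cm y - Cp y.
    by rewrite -opprB balance opprB.
  apply: le_trans (mass_ge_of_balance (ltW pD_gt0) (pp_gt0 y) (pm_gt0 y)
    (r_ge0 y) (Cp_lt1 y) (Cm_lt1 y) balance_swap).
  by rewrite ler_pM2l ?fmin_le.
Qed.
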